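(* Let $n\ge 2$, $c_1,\dots,c_n>0$, and fix $i\in\{1,\dots,n\}$. Let $Q_i\in\mathbb{R}^{n\times n}$ be the symmetric matrix with $(Q_i)_{ii}=\frac{n-2}{c_i^2}$, $(Q_i)_{jj}=\frac{1}{c_j^2}$ and $(Q_i)_{ij}=(Q_i)_{ji}=-\frac{1}{c_ic_j}$ for $j\neq i$, and all other entries $0$. Then $Q_i$ has $n-1$ positive eigenvalues, no zero eigenvalue and exactly one negative eigenvalue, i.e. $\mathrm{inertia}(Q_i)=\{n-1,0,1\}$.
   Context: $\mathrm{inertia}(Q)=\{a,b,c\}$ means $Q$ has $a$ positive, $b$ zero and $c$ negative eigenvalues (counted with multiplicity). *)

From HB Require Import structures.
From mathcomp Require Import all_boot all_order all_algebra.
Set Implicit Arguments. Unset Strict Implicit. Unset Printing Implicit Defensive.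
Import Order.TTheory GRing.Theory Num.Theory.
Local Open Scope ring_scope.

(* inertia A p z m : the (real) eigenvalues of A, counted with algebraic
   multiplicity (i.e. as roots of the characteristic polynomial), are
   d_0,...,d_{n-1}, with p of them positive, z zero and m negative. *)
Definition inertia (R : rcfType) (n : nat) (A : 'M[R]_n) (p z m : nat) : Prop :=
  exists d : 'I_n -> R,
    char_poly A = \prod_(k < n) ('X - (d k)%:P) /\
    #|[pred k | 0 < d k]| = p /\
    #|[pred k | d k == 0]| = z /\
    #|[pred k | d k < 0]| = m.

Definition Qmat (R : rcfType) (n : nat) (c : 'I_n -> R) (i : 'I_n) : 'M[R]_n :=
  \matrix_(j, k)
    if j == k then
      (if j == i then (n - 2)%:R / (c i ^+ 2) else 1 / (c j ^+ 2))
    else if (j == i) || (k == i) then - (1 / (c j * c k)) else 0.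

(* Over R[i] the matrix Q_i is Hermitian, so it is unitarily diagonalisable
   with real eigenvalues d_k, and in eigen-coordinates w its Hermitian form is
   sum_k d_k |w_k|^2.  On the hyperplane u_i = 0 the form of Q_i is diagonal
   with positive weights 1/c_j^2, hence positive definite; since any two
   coordinate axes of the eigenbasis span a plane meeting that hyperplane,
   at most one d_k is <= 0.  On the other hand Q_i c = -(1/c_i) e_i, so
   c^T Q_i c = -1 and some d_k is negative. *)

From HB Require Import structures.
From mathcomp Require Import all_boot all_order all_algebra.
From mathcomp Require Import complex ring.
Set Implicit Arguments.
Unset Strict Implicit.
Unset Printing Implicit Defensive.
Import Order.TTheory GRing.Theory Num.Theory.
Local Open Scope ring_scope.
Local Open Scope sesquilinear_scope.

Lemma char_poly_similar (F : fieldType) n (P B : 'M[F]_n) : P \in unitmx ->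
  char_poly (invmx P *m B *m P) = char_poly B.
Proof.
move=> Pu; set Pp := map_mx polyC P.
have Ppu : Pp \in unitmx by rewrite map_unitmx.
have XE : ('X%:M : 'M[{poly F}]_n) = invmx Pp *m 'X%:M *m Pp.
  by rewrite scalar_mxC -mulmxA mulVmx // mulmx1.
rewrite /char_poly.
have -> : char_poly_mx (invmx P *m B *m P) = invmx Pp *m char_poly_mx B *m Pp.
  by rewrite /char_poly_mx mulmxBr mulmxBl -XE !map_mxM map_invmx.
by rewrite !det_mulmx det_inv mulrC mulrA mulrV ?mul1r.
Qed.

Lemma char_poly_diag (F : fieldType) n (d : 'rV[F]_n) :
  char_poly (diag_mx d) = \prod_(k < n) ('X - (d 0 k)%:P).
Proof.
rewrite char_poly_trig ?diag_mx_is_trig //.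
by apply: eq_bigr => k _; rewrite mxE eqxx mulr1n.
Qed.

Lemma row_mulmx_colE (R : pzSemiRingType) n (u : 'rV[R]_n) (M : 'M[R]_n)
    (w : 'cV[R]_n) :
  (u *m M *m w) 0 0 = \sum_j \sum_l u 0 j * M j l * w l 0.
Proof.
rewrite mxE exchange_big; apply: eq_bigr => l _.
by rewrite mxE big_distrl.
Qed.

Lemma orthogonal_row_supp2 (F : fieldType) n (y : 'cV[F]_n) (k1 k2 : 'I_n) :
  k1 != k2 -> exists w : 'rV[F]_n,
    [/\ w != 0, w *m y = 0 & forall k, k != k1 -> k != k2 -> w 0 k = 0].
Proof.
move=> k12; have [y1_0|y1_neq0] := eqVneq (y k1 0) 0.
  exists (delta_mx 0 k1); split.
  - apply/negP => /eqP/matrixP/(_ 0 k1); rewrite !mxE !eqxx.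
    exact/eqP/oner_neq0.
  - by apply/matrixP => a b; rewrite !ord1 -rowE !mxE y1_0.
  - by move=> k /negbTE kk1 _; rewrite mxE kk1 andbF.
exists (y k2 0 *: delta_mx 0 k1 - y k1 0 *: delta_mx 0 k2); split.
- apply/negP => /eqP/matrixP/(_ 0 k2); rewrite !mxE !eqxx eq_sym (negbTE k12).
  by rewrite mulr0 mulr1 sub0r => /eqP; rewrite oppr_eq0; apply/negP.
- apply/matrixP => a b; rewrite !ord1 mulmxBl -!scalemxAl -!rowE !mxE.
  by rewrite mulrC subrr.
- by move=> k /negbTE kk1 /negbTE kk2; rewrite !mxE kk1 kk2 andbF !mulr0 subrr.
Qed.

Definition hform (C : numClosedFieldType) n (A : 'M[C]_n) (u : 'rV[C]_n) : C :=
  (u *m A *m u ^t*) 0 0.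

Lemma char_poly_spectral_diag (C : numClosedFieldType) n (A : 'M[C]_n) :
  A \is normalmx -> char_poly A = \prod_(k < n) ('X - (spectral_diag A 0 k)%:P).
Proof.
move=> /orthomx_spectralP {1}->.
by rewrite char_poly_similar ?spectral_unit // char_poly_diag.
Qed.

Section HermitianForm.
Variables (C : numClosedFieldType) (n : nat) (A : 'M[C]_n).
Hypothesis A_herm : A \is hermsymmx.
Let P := spectralmx A.
Let D := spectral_diag A.
Let P_unitary : P \is unitarymx := spectral_unitarymx A.

Lemma hform_spectral (w : 'rV[C]_n) :
  hform A (w *m P) = \sum_k D 0 k * `|w 0 k| ^+ 2.
Proof.
have AE : A = P^t* *m diag_mx D *m P.
  rewrite -invmx_unitary //; exact/orthomx_spectralP/hermitian_normalmx.
rewrite /hform [in X in X *m _]AE trmx_mul map_mxM !mulmxA !mulmxtVK //.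
rewrite mul_mx_diag mxE; apply: eq_bigr => k _.
by rewrite !mxE normCK mulrAC mulrC.
Qed.

Lemma spectral_diag_real k : D 0 k \is Num.real.
Proof. exact/mxOverP/hermitian_spectral_diag_real. Qed.

Lemma hform_lt0_spectral_diag (u : 'rV[C]_n) :
  hform A u < 0 -> exists k, D 0 k < 0.
Proof.
move=> u_neg; apply/existsP; apply: contraLR u_neg => /existsPn D_ge0.
rewrite -(mulmxKtV u P_unitary) // hform_spectral le_gtF //.
apply: sumr_ge0 => k _; rewrite mulr_ge0 ?exprn_ge0 //.
by rewrite real_leNgt ?rpred0 ?spectral_diag_real ?D_ge0.
Qed.

Lemma spectral_diag_le0_uniq (x : 'cV[C]_n) :
    (forall u, u *m x = 0 -> u != 0 -> 0 < hform A u) ->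
  forall k1 k2, D 0 k1 <= 0 -> D 0 k2 <= 0 -> k1 = k2.
Proof.
move=> hyperplane_pos k1 k2 D1_le0 D2_le0; apply/eqP; apply: contraT => k12.
have [w [w_neq0 w_orth w_supp]] := orthogonal_row_supp2 (P *m x) k12.
have wP_neq0 : w *m P != 0.
  apply: contra_neq w_neq0 => wP0.
  by rewrite -(mulmxtVK w P_unitary) wP0 mul0mx.
have := hyperplane_pos (w *m P); rewrite -mulmxA w_orth => /(_ erefl wP_neq0).
rewrite hform_spectral => /lt_geF <-; apply: sumr_le0 => k _.
have [->|kk1] := eqVneq k k1; first by rewrite mulr_le0_ge0 ?exprn_ge0.
have [->|kk2] := eqVneq k k2; first by rewrite mulr_le0_ge0 ?exprn_ge0.
by rewrite w_supp // normr0 exprS mul0r mulr0.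
Qed.

End HermitianForm.

Lemma inertia_one_negative (R : rcfType) n (A : 'M[R]_n) (d : 'I_n -> R)
    (k0 : 'I_n) :
  char_poly A = \prod_(k < n) ('X - (d k)%:P) ->
  d k0 < 0 -> (forall k, k != k0 -> 0 < d k) -> inertia A n.-1 0 1.
Proof.
move=> charAE dk0_lt0 d_gt0; exists d; split=> //; split; last split.
- rewrite (eq_card (B := predC1 k0)) ?cardC1 ?card_ord // => k; rewrite !inE.
  by have [->|/d_gt0->] := eqVneq k k0; first by rewrite lt_gtF.
- apply: eq_card0 => k; rewrite !inE.
  by have [->|/d_gt0/gt_eqF//] := eqVneq k k0; rewrite lt_eqF.
- apply: (@eq_card1 _ k0) => k; rewrite !inE.
  by have [->|kk0] := eqVneq k k0; rewrite ?dk0_lt0 // lt_gtF ?d_gt0.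
Qed.

Section RealSymmetric.
Variables (R : rcfType) (n : nat) (Q : 'M[R]_n).
Hypothesis Q_sym : Q^T = Q.
Local Notation toC := (real_complex R).
Local Notation QC := (map_mx toC Q).

Lemma conj_real_complex (x : R) : (toC x)^* = toC x.
Proof. by apply/CrealP/complex_realP; exists x. Qed.

Lemma hermsym_map_real_complex : QC \is hermsymmx.
Proof.
apply/is_hermitianmxP; rewrite expr0 scale1r [(map_mx _ Q)^T]map_trmx Q_sym.
by apply/matrixP => j k; rewrite !mxE conj_real_complex.
Qed.

Lemma hform_map_real_complex (v : 'rV[R]_n) :
  hform QC (map_mx toC v) = toC ((v *m Q *m v^T) 0 0).
Proof.
have vE : (map_mx toC v)^t* = map_mx toC v^T.
  by apply/matrixP => j k; rewrite !mxE conj_real_complex.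
by rewrite /hform vE -!map_mxM mxE.
Qed.

Lemma inertia_of_hform_signs (x : 'cV[R[i]]_n) (v : 'rV[R]_n) :
    (forall u, u *m x = 0 -> u != 0 -> 0 < hform QC u) ->
    (v *m Q *m v^T) 0 0 < 0 ->
  inertia Q n.-1 0 1.
Proof.
move=> hyperplane_pos v_neg; have QC_herm := hermsym_map_real_complex.
pose D := spectral_diag QC; pose d k := complex.Re (D 0 k).
have DE k : D 0 k = toC (d k) by rewrite RRe_real ?spectral_diag_real.
have [k0 dk0_lt0] : exists k0, d k0 < 0.
  have : hform QC (map_mx toC v) < 0 by rewrite hform_map_real_complex ltcR.
  by move=> /(hform_lt0_spectral_diag QC_herm) [k]; rewrite DE ltcR; exists k.
apply: (inertia_one_negative _ dk0_lt0).
  apply: (@map_poly_inj _ _ toC).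
  rewrite map_char_poly char_poly_spectral_diag ?hermitian_normalmx //.
  rewrite rmorph_prod.
  by apply: eq_bigr => k _; rewrite rmorphB /= map_polyX map_polyC DE.
move=> k kk0; rewrite ltNge; apply: contra kk0 => dk_le0; apply/eqP.
apply: (spectral_diag_le0_uniq QC_herm hyperplane_pos);
  by rewrite DE lecR // ltW.
Qed.

End RealSymmetric.

Section Qmat.
Variables (R : rcfType) (n : nat) (c : 'I_n -> R) (i : 'I_n).
Hypothesis c_gt0 : forall j, 0 < c j.
Local Notation Q := (Qmat c i).

Lemma Qmat_sym : Q^T = Q.
Proof.
apply/matrixP => j l; rewrite !mxE eq_sym orbC.
by case: eqP => [->|_] //; rewrite [c l * _]mulrC.
Qed.

Lemma Qmat_diag j : j != i -> Q j j = (c j ^+ 2)^-1.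
Proof. by move=> /negbTE ji; rewrite mxE eqxx ji div1r. Qed.

Lemma Qmat_off_row_col j l : j != l -> j != i -> l != i -> Q j l = 0.
Proof. by move=> /negbTE jl /negbTE ji /negbTE li; rewrite mxE jl ji li. Qed.

Lemma Qmat_mulmx_col (hn : (2 <= n)%N) :
  Q *m \col_l c l = - (c i)^-1 *: delta_mx i 0.
Proof.
have c_neq0 j : c j != 0 by rewrite gt_eqF.
apply/matrixP => j b; rewrite ord1 mxE [RHS]mxE mxE eqxx andbT.
have [->|ji] := eqVneq j i; last first.
  rewrite (bigD1 j) //= (bigD1 i) 1?eq_sym //= big1 => [|l /andP[lj li]].
    rewrite !mxE !eqxx (negbTE ji) orbT.
    by rewrite addr0 mulr0; field; rewrite ?c_neq0.
  by rewrite Qmat_off_row_col ?mul0r // eq_sym.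
rewrite (bigD1 i) //= !mxE !eqxx /=.
under eq_bigr => l li do rewrite !mxE eq_sym (negbTE li) eqxx /= div1r invfM
  mulNr -mulrA mulVf ?c_neq0 // mulr1.
rewrite sumr_const cardC1 card_ord -subn1 -(subnSK hn) mulrSr -mulr_natr.
by field; rewrite ?c_neq0.
Qed.

Lemma Qmat_form_c (hn : (2 <= n)%N) :
  ((\row_l c l) *m Q *m (\row_l c l)^T) 0 0 = -1.
Proof.
have -> : (\row_l c l)^T = \col_l c l by apply/matrixP => j b; rewrite !mxE.
rewrite -mulmxA Qmat_mulmx_col // -scalemxAr -colE !mxE.
by rewrite mulNr mulVf ?gt_eqF.
Qed.

Local Notation toC := (real_complex R).

Lemma hform_Qmat_gt0 (u : 'rV[R[i]]_n) :
  u 0 i = 0 -> u != 0 -> 0 < hform (map_mx toC Q) u.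
Proof.
move=> ui0 /rV0Pn [j0 uj0_neq0].
have j0i : j0 != i by apply: contra_neq uj0_neq0 => ->.
have inner_sumE j : \sum_l u 0 j * (map_mx toC Q) j l * (u ^t*) l 0 =
    `|u 0 j| ^+ 2 * toC (c j ^+ 2)^-1.
  have [->|ji] := eqVneq j i.
    by rewrite ui0 normr0 exprS !mul0r big1 // => l; rewrite !mul0r.
  rewrite (bigD1 j) //= big1 ?addr0 => [|l lj].
    by rewrite [map_mx _ _ j j]mxE Qmat_diag // !mxE normCK mulrAC.
  have [->|li] := eqVneq l i; first by rewrite !mxE ui0 conjC0 mulr0.
  have Qjl : map_mx toC Q j l = 0.
    by rewrite mxE Qmat_off_row_col // eq_sym.
  by rewrite Qjl mulr0 mul0r.
rewrite /hform row_mulmx_colE; under eq_bigr do rewrite inner_sumE.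
rewrite (bigD1 j0) //= ltr_wpDr ?sumr_ge0 // => [j _|].
  by rewrite mulr_ge0 ?exprn_ge0 // ler0c invr_ge0 exprn_ge0 // ltW.
by rewrite mulr_gt0 ?exprn_gt0 ?normr_gt0 // ltcR invr_gt0 exprn_gt0.
Qed.

End Qmat.

Theorem mainTheorem5 (R : rcfType) (n : nat) (hn : (2 <= n)%N)
  (c : 'I_n -> R) (hc : forall j, 0 < c j) (i : 'I_n) :
  inertia (Qmat c i) n.-1 0 1.
Proof.
apply: (inertia_of_hform_signs (Qmat_sym c i)
         (x := delta_mx i 0) (v := \row_l c l)).
  move=> u /matrixP/(_ 0 0); rewrite -colE !mxE => ui0.
  exact: hform_Qmat_gt0.
by rewrite Qmat_form_c // ltrN10.
Qed.
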